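(* The following identity holds: \begin{equation*} \begin{split} &\Delta x \sum_{i=0}^{N-1}\left(\frac{\operatorname{Up}(\varrho^k \widehat u^k u^{k})_{i+3/2} -\operatorname{Up}(\varrho^k \widehat u^k u^{k})_{i-1/2}}{2\Delta x}\right)u_{i+1/2}^k \\ &\qquad = -\Delta x \sum_{i=0}^{N-1}\operatorname{Up}\left(\varrho^k u^{k}\right)_{i+1/2}\partial_{i+1/2}~\left(\frac{|\widehat u^k|^2}{2}\right) + \mathcal{N}_2 \\ &\qquad = -\Delta x\sum_i \partial_t^k \varrho_i\left(\frac{|\widehat u^k|^2}{2}\right)+ \mathcal{N}_2, \end{split} \end{equation*} where the numerical diffusion term $\mathcal{N}_2$ is given by \begin{equation*} \mathcal{N}_2 = \frac{(\Delta x)^2 }{2}\sum_{i=0}^{N-1}\left|\operatorname{Up}\left(\varrho^k u^{k}\right)_{i+1/2}\right|\left|\partial_{i+1/2} \widehat u^k\right|^2. \end{equation*}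
   Context: Finite difference scheme for 1D viscous isentropic compressible Navier–Stokes on $(0,L)$. The interval $[0,L]$ is split into $N$ cells of length $\Delta x=L/N$ with nodes $x_{i-1/2}=i\Delta x$, $i=0,\dots,N$; time levels $t^k=k\Delta t$. Velocities $u^k_{i-1/2}$ live on the nodes with $u^k_{-1/2}=u^k_{N-1/2}=0$, and densities $\varrho^k_i>0$ live on the cells $i=0,\dots,N-1$. Notation: $u^+=\max\{u,0\}$, $u^-=\min\{u,0\}$; $\widehat u_i=\frac{u_{i-1/2}+u_{i+1/2}}{2}$; upwind fluxes $\operatorname{Up}(\varrho u)_{i+1/2}=\varrho_i u^+_{i+1/2}+\varrho_{i+1}u^-_{i+1/2}$ and $\operatorname{Up}(\varrho\widehat u u)_{i+1/2}=(\varrho_i\widehat u_i)u^+_{i+1/2}+(\varrho_{i+1}\widehat u_{i+1})u^-_{i+1/2}$; discrete derivatives $\partial_{i+1/2}f=\frac{f_{i+1}-f_i}{\Delta x}$, $\partial_i v=\frac{v_{i+1/2}-v_{i-1/2}}{\Delta x}$, $\partial_t^k f_i=\frac{f_i^k-f_i^{k-1}}{\Delta t}$. The densities and velocities satisfy the upwind continuity scheme $\partial_t^k\varrho_i+\partial_i\operatorname{Up}(\varrho^k u^k)=0$ (used for the second equality). *)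

From HB Require Import structures.
From mathcomp Require Import all_boot all_order all_algebra.
Set Implicit Arguments. Unset Strict Implicit. Unset Printing Implicit Defensive.
Import Order.TTheory GRing.Theory Num.Theory.
Local Open Scope ring_scope.

(* Indexing conventions (integer indices):
   - cell quantities f : int -> R, f i = f_i (cell i, meaningful for 0 <= i < N);
   - node quantities v : int -> R, v j = v_{j-1/2} (node x_{j-1/2} = j*dx,
     meaningful for 0 <= j <= N).  So u_{i+1/2} = v (i+1), u_{i-1/2} = v i. *)

Section Defs.
Variable R : realFieldType.

Definition posp (x : R) : R := Num.max x 0.
Definition negp (x : R) : R := Num.min x 0.

Definition uhat (u : int -> R) (i : int) : R := (u i + u (i + 1)) / 2.

(* Up(rho u) = Up rho u ;  Up(rho \hat u u) = Up (fun i => rho i * uhat u i) u. *)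
Definition Up (a u : int -> R) (j : int) : R :=
  a (j - 1) * posp (u j) + a j * negp (u j).

(* With the indexing above this is both
   \partial_{i+1/2} f for a cell quantity f and \partial_i v for a node
   quantity v (since v_{i+1/2} - v_{i-1/2} = v (i+1) - v i). *)
Definition fdiff (f : int -> R) (dx : R) (i : int) : R := (f (i + 1) - f i) / dx.

End Defs.

From HB Require Import structures.
From mathcomp Require Import all_boot all_order all_algebra.
From mathcomp Require Import ring.
Import Order.TTheory GRing.Theory Num.Theory.
Local Open Scope ring_scope.

(* The upwind flux of [rho * hat u] is the mass flux [Up rho u] times the
   upwind value [c] of [hat u], and summation by parts (the velocity vanishes
   on the boundary) turns the central difference of that flux into the jump of
   [hat u] across the node.  The identity
   [c (y - x) = (y^2 - x^2)/2 -+ (y - x)^2/2], whose sign is that of the mass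
   flux because [rho >= 0], splits the result into a kinetic energy flux and
   the dissipation [N2]; one more summation by parts and the discrete
   continuity equation give the second equality. *)

Lemma PoszS (i : nat) : (i.+1)%:Z = i%:Z + 1.
Proof. by rewrite -addn1 PoszD. Qed.

Section SummationByParts.
Variable R : comPzRingType.
Implicit Types (F G v w : int -> R) (N : nat).

Lemma sumr_by_parts G w N : G 0 = 0 -> G N = 0 ->
  \sum_(0 <= i < N) G (i%:Z + 1) * (w (i%:Z + 1) - w i%:Z)
    = - \sum_(0 <= i < N) (G (i%:Z + 1) - G i%:Z) * w i%:Z.
Proof.
move=> G0 GN; pose H (i : nat) := G i%:Z * w i%:Z.
have step i : G (i%:Z + 1) * (w (i%:Z + 1) - w i%:Z)
    = (H i.+1 - H i) - (G (i%:Z + 1) - G i%:Z) * w i%:Z.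
  by rewrite /H PoszS; ring.
rewrite (eq_bigr _ (fun i _ => step i)) sumrB telescope_sumr //.
by rewrite /H GN G0 !mul0r subr0 sub0r.
Qed.

Lemma sumr_central_diff_by_parts F v N :
  F 0 = 0 -> F N = 0 -> v 0 = 0 -> v N = 0 ->
  \sum_(0 <= i < N) (F (i%:Z + 2) - F i%:Z) * v (i%:Z + 1)
    = - \sum_(0 <= i < N) F (i%:Z + 1) * (v (i%:Z + 2) - v i%:Z).
Proof.
move=> F0 FN v0 vN.
pose D (i : nat) := F (i%:Z + 1) * v i%:Z + F i%:Z * v (i%:Z + 1).
have step i : (F (i%:Z + 2) - F i%:Z) * v (i%:Z + 1)
    = (D i.+1 - D i) - F (i%:Z + 1) * (v (i%:Z + 2) - v i%:Z).
  by rewrite /D PoszS -[i%:Z + 1 + 1]addrA; ring.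
rewrite (eq_bigr _ (fun i _ => step i)) sumrB telescope_sumr //.
by rewrite /D F0 FN v0 vN !(mul0r, mulr0, addr0) subrr sub0r.
Qed.

End SummationByParts.

Section Upwind.
Variable R : realFieldType.
Implicit Types (a b u : int -> R) (j : int).

Lemma Up_vel0 a u j : u j = 0 -> Up a u j = 0.
Proof. by move=> uj0; rewrite /Up /posp /negp uj0 maxxx minxx !mulr0 addr0. Qed.

Lemma Up_mul a b u j :
  Up (fun i => a i * b i) u j
    = Up a u j * (if 0 <= u j then b (j - 1) else b j).
Proof.
by rewrite /Up /posp /negp; case: leP => _; rewrite !mulr0 ?addr0 ?add0r mulrAC.
Qed.

Lemma upwind_mul_diff (g x y : R) (s : bool) :
  (s -> 0 <= g) -> (~~ s -> g <= 0) ->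
  g * (if s then x else y) * (y - x)
    = g * (y ^+ 2 / 2 - x ^+ 2 / 2) - `|g| * (y - x) ^+ 2 / 2.
Proof.
case: s => [/(_ isT) g_ge0 _ | _ /(_ isT) g_le0].
- by rewrite ger0_norm //; field.
- by rewrite ler0_norm //; field.
Qed.

(* A nonnegative density is only needed in the upwind cell of each node. *)
Lemma Up_mul_diff a b u j :
  (0 < u j -> 0 <= a (j - 1)) -> (u j < 0 -> 0 <= a j) ->
  Up (fun i => a i * b i) u j * (b j - b (j - 1))
    = Up a u j * (b j ^+ 2 / 2 - b (j - 1) ^+ 2 / 2)
      - `|Up a u j| * (b j - b (j - 1)) ^+ 2 / 2.
Proof.
move=> a_up a_down; rewrite Up_mul upwind_mul_diff //.
- rewrite /Up /posp /negp le_eqVlt => /orP[/eqP <- | u_gt0].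
    by rewrite maxxx minxx !mulr0 addr0.
  by rewrite (max_l (ltW u_gt0)) (min_r (ltW u_gt0)) mulr0 addr0
             mulr_ge0 ?a_up ?ltW.
- rewrite -ltNge => u_lt0.
  by rewrite /Up /posp /negp (max_r (ltW u_lt0)) (min_l (ltW u_lt0)) mulr0
             add0r mulr_ge0_le0 ?a_down ?ltW.
Qed.

Lemma mulr_fdiff (f : int -> R) (dx : R) (i : int) :
  dx != 0 -> dx * fdiff f dx i = f (i + 1) - f i.
Proof. by move=> dx_neq0; rewrite /fdiff mulrC divfK. Qed.

Lemma uhat_diff u j : uhat u (j + 1) - uhat u j = (u (j + 2) - u j) / 2.
Proof. by rewrite /uhat -addrA; field. Qed.

Lemma sum_Up_convective (rho u : int -> R) (N : nat) :
  u 0 = 0 -> u N = 0 -> (forall i : nat, (i < N)%N -> 0 <= rho i%:Z) ->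
  let F := Up (fun i => rho i * uhat u i) u in
  let G := Up rho u in
  \sum_(0 <= i < N) (F (i%:Z + 2) - F i%:Z) / 2 * u (i%:Z + 1)
    = - \sum_(0 <= i < N) G (i%:Z + 1)
          * (uhat u (i%:Z + 1) ^+ 2 / 2 - uhat u i%:Z ^+ 2 / 2)
      + \sum_(0 <= i < N) `|G (i%:Z + 1)|
          * (uhat u (i%:Z + 1) - uhat u i%:Z) ^+ 2 / 2.
Proof.
move=> u0 uN rho_ge0 F G.
have F0 : F 0 = 0 by apply: Up_vel0.
have FN : F N = 0 by apply: Up_vel0.
transitivity (- \sum_(0 <= i < N)
    F (i%:Z + 1) * (uhat u (i%:Z + 1) - uhat u i%:Z)).
  under eq_bigr => i _ do rewrite mulrAC.
  rewrite -mulr_suml sumr_central_diff_by_parts // mulNr mulr_suml.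
  by under eq_bigr => i _ do rewrite -mulrA -uhat_diff.
rewrite -!sumrN -big_split; apply: eq_big_nat => i /andP[_ iN].
have := Up_mul_diff rho (uhat u) u (i%:Z + 1); rewrite addrK => ->.
- by rewrite /= opprD opprK.
- by move=> _; apply: rho_ge0.
- rewrite -PoszS => u_lt0; apply: rho_ge0.
  rewrite ltn_neqAle iN andbT; apply: contraTneq u_lt0 => ->.
  by rewrite uN ltxx.
Qed.

End Upwind.

Theorem lemma3p2 (R : realFieldType) (L dt : R) (N k : nat)
  (rho u : nat -> int -> R)
  (hL : 0 < L) (hN : (0 < N)%N) (hdt : 0 < dt) (hk : (0 < k)%N)
  (hbc : forall m : nat, u m 0 = 0 /\ u m (N%:Z) = 0)
  (hpos : forall (m i : nat), (i < N)%N -> 0 < rho m (i%:Z))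
  (hcont : forall (m i : nat), (0 < m)%N -> (i < N)%N ->
     (rho m (i%:Z) - rho m.-1 (i%:Z)) / dt
       + fdiff (Up (rho m) (u m)) (L / N%:R) (i%:Z) = 0) :
  let dx := L / N%:R in
  let F := Up (fun i => rho k i * uhat (u k) i) (u k) in
  let G := Up (rho k) (u k) in
  let N2 := dx ^+ 2 / 2 *
      \sum_(0 <= i < N) `|G (i%:Z + 1)| * `|fdiff (uhat (u k)) dx (i%:Z)| ^+ 2 in
  dx * (\sum_(0 <= i < N)
          ((F (i%:Z + 2) - F (i%:Z)) / (2 * dx)) * u k (i%:Z + 1))
    = - dx * (\sum_(0 <= i < N)
          G (i%:Z + 1) * fdiff (fun j => `|uhat (u k) j| ^+ 2 / 2) dx (i%:Z)) + N2
  /\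
  - dx * (\sum_(0 <= i < N)
          G (i%:Z + 1) * fdiff (fun j => `|uhat (u k) j| ^+ 2 / 2) dx (i%:Z)) + N2
    = - dx * (\sum_(0 <= i < N)
          ((rho k (i%:Z) - rho k.-1 (i%:Z)) / dt) * (`|uhat (u k) (i%:Z)| ^+ 2 / 2)) + N2.
Proof.
move=> dx F G N2.
have dx_neq0 : dx != 0 by rewrite mulf_neq0 ?invr_eq0 // gt_eqF ?ltr0n.
have [u0 uN] := hbc k.
have sqr_norm (x : R) : `|x| ^+ 2 = x ^+ 2 by rewrite real_normK ?num_real.
have energy_flux : - dx * (\sum_(0 <= i < N)
    G (i%:Z + 1) * fdiff (fun j => `|uhat (u k) j| ^+ 2 / 2) dx i%:Z)
  = - \sum_(0 <= i < N) G (i%:Z + 1) *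
      (uhat (u k) (i%:Z + 1) ^+ 2 / 2 - uhat (u k) i%:Z ^+ 2 / 2).
  rewrite mulNr mulr_sumr; congr (- _); apply: eq_bigr => i _.
  by rewrite mulrCA mulr_fdiff // !sqr_norm.
have convective : dx * (\sum_(0 <= i < N)
    ((F (i%:Z + 2) - F i%:Z) / (2 * dx)) * u k (i%:Z + 1))
  = \sum_(0 <= i < N) (F (i%:Z + 2) - F i%:Z) / 2 * u k (i%:Z + 1).
  by rewrite mulr_sumr; apply: eq_bigr => i _; field.
have dissipation : N2 = \sum_(0 <= i < N) `|G (i%:Z + 1)|
    * (uhat (u k) (i%:Z + 1) - uhat (u k) i%:Z) ^+ 2 / 2.
  rewrite /N2 mulr_sumr; apply: eq_bigr => i _.
  by rewrite sqr_norm /fdiff; field.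
split.
- rewrite convective energy_flux dissipation.
  by apply: sum_Up_convective => // i iN; apply/ltW/hpos.
- have G0 : G 0 = 0 by apply: Up_vel0.
  have GN : G N = 0 by apply: Up_vel0.
  congr (_ + N2); rewrite energy_flux.
  rewrite (sumr_by_parts _ G (fun j => uhat (u k) j ^+ 2 / 2)) // opprK.
  rewrite mulNr mulr_sumr -sumrN; apply: eq_big_nat => i /andP[_ iN].
  have -> : (rho k i%:Z - rho k.-1 i%:Z) / dt = - fdiff G dx i%:Z.
    by apply/eqP; rewrite -subr_eq0 opprK (hcont k i hk iN).
  by rewrite sqr_norm mulNr mulrN opprK mulrA mulr_fdiff.
Qed.
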